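(* Let $\psi:[0,T]\times\overline{\mathcal O}\to\mathbb R$ be bounded Borel and let $(\psi_n)$ be a nonincreasing sequence of continuous functions on $[0,T]\times\overline{\mathcal O}$ converging pointwise to $\psi^*$. Then $V[\psi_n]$ is nonincreasing in $n$ and converges pointwise to $V[\psi^*]$, where $V[\Phi](t,x)=\inf_{\alpha\in L^2(t,T;\mathbb R^m)}\sup_{\theta\in[t,T]}\{\frac12\int_t^\theta|\alpha_s|^2ds+\Phi(\theta,Y^{t,x,\alpha}_\theta)\}$.
   Context: Standing assumptions: $\mathcal O\subset\mathbb R^d$ bounded open of class $W^{2,\infty}$ with outward normal $n$; $\gamma$ Lipschitz with $\gamma\cdot n\ge c_0>0$ on $\partial\mathcal O$; $b,\sigma$ continuous on $[0,T]\times\overline{\mathcal O}$, Lipschitz in space uniformly in time. $Y^{t,x,\alpha}$: solution on $[t,T]$ of $Y_s=x+\int_t^s(b(u,Y_u)-\sigma(u,Y_u)\alpha_u)du-z_s$, $Y_s\in\overline{\mathcal O}$, $z_s=\int_t^s1_{\partial\mathcal O}(Y_u)\gamma(Y_u)d|z|_u$. $\psi^*$ is the upper semicontinuous envelope of $\psi$. *)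

From HB Require Import structures.
From mathcomp Require Import all_boot all_order all_algebra.
From mathcomp Require Import all_classical all_reals all_analysis.
Set Implicit Arguments. Unset Strict Implicit. Unset Printing Implicit Defensive.
Import Order.TTheory GRing.Theory Num.Theory.
Import numFieldNormedType.Exports.
Local Open Scope classical_set_scope.
Local Open Scope ring_scope.

Section defs.
Context {R : realType}.

Definition sqn {k : nat} (v : 'rV[R]_k) : R := \sum_(i < k) v 0 i ^+ 2.
Definition enorm {k : nat} (v : 'rV[R]_k) : R := Num.sqrt (sqn v).
Definition dotv {k : nat} (u v : 'rV[R]_k) : R := \sum_(i < k) u 0 i * v 0 i.
Definition mxnorm {p q : nat} (M : 'M[R]_(p, q)) : R :=
  Num.sqrt (\sum_(i < p) \sum_(j < q) M i j ^+ 2).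

Definition boundary {d : nat} (O : set 'rV[R]_d) : set 'rV[R]_d :=
  closure O `\` O.

Definition lipschitz_on {k l : nat} (A : set 'rV[R]_k) (f : 'rV[R]_k -> 'rV[R]_l) :=
  exists L : R, forall x y, A x -> A y -> enorm (f x - f y) <= L * enorm (x - y).

(** O is a domain of class W^{2,oo} (= C^{1,1}) with outward unit normal n:
    O = {rho < 0} for a C^1 function rho with Lipschitz gradient g, g <> 0 on
    {rho = 0}, and n = g/|g| on the boundary. *)
Definition W2inf_domain {d : nat} (O : set 'rV[R]_d) (n : 'rV[R]_d -> 'rV[R]_d) :=
  exists (rho : 'rV[R]_d -> R) (g : 'rV[R]_d -> 'rV[R]_d),
    [/\ (forall x v, is_derive x v rho (dotv (g x) v)),
        lipschitz_on setT g,
        O = [set x | rho x < 0],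
        (forall x, rho x = 0 -> g x != 0) &
        (forall x, boundary O x -> n x = (enorm (g x))^-1 *: g x)].

Definition dom {d : nat} (T : R) (O : set 'rV[R]_d) : set (R * 'rV[R]_d) :=
  [set p | 0 <= p.1 <= T /\ closure O p.2].

Definition standing {d m : nat} (T : R) (O : set 'rV[R]_d)
    (n gam : 'rV[R]_d -> 'rV[R]_d) (b : R -> 'rV[R]_d -> 'rV[R]_d)
    (sig : R -> 'rV[R]_d -> 'M[R]_(d, m)) :=
  [/\ open O, bounded_set O, W2inf_domain O n &
      lipschitz_on (closure O) gam] /\
  [/\
      (exists c0 : R, 0 < c0 /\ forall x, boundary O x -> c0 <= dotv (gam x) (n x)),
      {within dom T O, continuous (fun p => b p.1 p.2)},
      {within dom T O, continuous (fun p => sig p.1 p.2)} &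
      (exists L : R, forall s x y, 0 <= s <= T -> closure O x -> closure O y ->
          enorm (b s x - b s y) <= L * enorm (x - y) /\
          mxnorm (sig s x - sig s y) <= L * enorm (x - y))].

Definition tv {d : nat} (z : R -> 'rV[R]_d) (a b : R) : \bar R :=
  ereal_sup [set e | exists (N : nat) (p : nat -> R),
     [/\ p 0%N = a, p N = b, (forall k, (k < N)%N -> p k <= p k.+1) &
         e = (\sum_(k < N) enorm (z (p k.+1) - z (p k)))%:E]].

Definition L2 {m : nat} (t T : R) (alpha : R -> 'rV[R]_m) :=
  (forall i : 'I_m, measurable_fun (`[t, T] : set (measurableTypeR R))
                                   (fun s => alpha s 0 i)) /\
  (\int[lebesgue_measure]_(s in `[t, T]) (sqn (alpha s))%:E < +oo)%E.

(** Y is a solution on [t,T] of the reflected (Skorokhod) problem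
    Y_s = x + int_t^s (b(u,Y_u) - sig(u,Y_u) alpha_u) du - z_s, Y_s in closure O,
    z_s = int_t^s 1_{boundary O}(Y_u) gam(Y_u) d|z|_u,
    with z continuous of bounded variation, |z| its total variation;
    mu is the Lebesgue-Stieltjes measure d|z| on (t,T]. *)
Definition SP_sol {d m : nat} (O : set 'rV[R]_d) (gam : 'rV[R]_d -> 'rV[R]_d)
    (b : R -> 'rV[R]_d -> 'rV[R]_d) (sig : R -> 'rV[R]_d -> 'M[R]_(d, m))
    (T t : R) (x : 'rV[R]_d) (alpha : R -> 'rV[R]_m) (Y : R -> 'rV[R]_d) :=
  exists z : R -> 'rV[R]_d,
    [/\ {within `[t, T], continuous Y},
        {within `[t, T], continuous z},
        (forall s, t <= s <= T -> closure O (Y s)) &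
        (tv z t T < +oo)%E] /\
    [/\
        (forall s (i : 'I_d), t <= s <= T ->
           (Y s 0 i - x 0 i + z s 0 i)%:E =
           (\int[lebesgue_measure]_(u in `[t, s])
              ((b u (Y u) - alpha u *m (sig u (Y u))^T) 0 i)%:E)%E) &
        exists mu : {measure set (measurableTypeR R) -> \bar R},
          (forall a c, t <= a -> a <= c -> c <= T ->
             mu `]a, c]%classic = (tv z t c - tv z t a)%E) /\
          (forall s (i : 'I_d), t <= s <= T ->
             (z s 0 i)%:E =
             (\int[mu]_(u in `]t, s]) (\1_(boundary O) (Y u) * gam (Y u) 0 i)%:E)%E)].

Definition V {d m : nat} (T : R)
    (Y : R -> 'rV[R]_d -> (R -> 'rV[R]_m) -> R -> 'rV[R]_d)
    (Phi : R * 'rV[R]_d -> R) (t : R) (x : 'rV[R]_d) : \bar R :=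
  ereal_inf [set ereal_sup
     [set ((2^-1)%:E * \int[lebesgue_measure]_(s in `[t, theta]) (sqn (alpha s))%:E
           + (Phi (theta, Y t x alpha theta))%:E)%E | theta in `[t, T]]
   | alpha in L2 t T].

(** upper semicontinuous envelope of psi relative to the set D *)
Definition usc_env {d : nat} (D : set (R * 'rV[R]_d)) (psi : R * 'rV[R]_d -> R)
    (p : R * 'rV[R]_d) : R :=
  fine (ereal_inf [set ereal_sup [set (psi q)%:E | q in U `&` D] | U in nbhs p]).

Definition Borel_on {d : nat} (D : set (R * 'rV[R]_d)) (psi : R * 'rV[R]_d -> R) :=
  forall B : set R, open B -> <<s [set U | open U] >> (D `&` psi @^-1` B).

End defs.

From HB Require Import structures.
From mathcomp Require Import all_boot all_order all_algebra.
From mathcomp Require Import all_classical all_reals all_analysis.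
From mathcomp Require Import lra.
Set Implicit Arguments. Unset Strict Implicit. Unset Printing Implicit Defensive.
Import Order.TTheory GRing.Theory Num.Theory.
Import numFieldNormedType.Exports.
Local Open Scope classical_set_scope.
Local Open Scope ring_scope.

(* V is monotone in the obstacle, which gives the monotonicity of V[psi_n] and
   V[psi*] <= V[psi_n]. Conversely, fix a control alpha whose cost for psi* is
   below r. Along its continuous trajectory, theta |-> energy/2 + psi_n(theta, Y_theta)
   are continuous functions decreasing pointwise to the psi* analogue on the
   compact [t, T], so by Dini's argument they are eventually uniformly below r,
   whence V[psi_n] <= r for large n. *)

Lemma dini_near_lt (R : realType) (X : topologicalType) (A : set X)
    (hk : nat -> X -> R) (h : X -> R) (c : R) :
  compact A ->
  (forall k, {within A, continuous hk k}) ->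
  (forall k a, A a -> hk k.+1 a <= hk k a) ->
  (forall a, A a -> hk ^~ a @ \oo --> h a) ->
  (forall a, A a -> h a < c) ->
  \forall k \near \oo, forall a, A a -> hk k a < c.
Proof.
move=> cA hc hmono hcv hlt.
have hle k K a : A a -> (K <= k)%N -> hk k a <= hk K a.
  move=> Aa; elim: k => [|k IH]; first by rewrite leqn0 => /eqP->.
  rewrite leq_eqVlt => /orP[/eqP->//|]; rewrite ltnS => /IH.
  exact: le_trans (hmono _ _ Aa).
suff: \forall k \near \oo, A `<=` (fun a => A a -> hk k a < c).
  by apply: filterS => k H a Aa; exact: H.
apply: (proj1 (compact_near_coveringP A) cA) => a Aa.
have [K _ HK] := cvgr_lt _ (hcv a Aa) _ (hlt a Aa).
have hkK_near : \forall b \near within A (nbhs a), hk K b < c.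
  exact: cvgr_lt _ ((subspace_continuousP _ _).1 (hc K) a Aa) _ (HK K (leqnn K)).
exists ([set b | A b -> hk K b < c], [set k | (K <= k)%N]).
  by split; [exact: hkK_near | exists K].
move=> [b k] /= [hkKb Kk] Ab.
exact: le_lt_trans (hle k K b Ab Kk) (hkKb Ab).
Qed.

Lemma within_continuous_comp_in {U V W : topologicalType}
    (A : set U) (D : set V) (f : U -> V) (g : V -> W) :
  (forall u, A u -> D (f u)) ->
  {within A, continuous f} -> {within D, continuous g} ->
  {within A, continuous (g \o f)}.
Proof.
move=> fAD /subspace_continuousP cf /subspace_continuousP cg.
apply/subspace_continuousP => u Au.
have f_within : f @ within A (nbhs u) --> within D (nbhs (f u)).
  move=> B DB.
  have fB : within A (nbhs u) (fun v => D (f v) -> B (f v)) by exact: cf u Au _ DB.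
  change (within A (nbhs u) (fun v => B (f v))).
  by move: fB; apply: (@filterS _ (nbhs u)) => v fBv Av; exact: fBv Av (fAD v Av).
exact: cvg_comp f_within (cg _ (fAD u Au)).
Qed.

Lemma lee_fin_gt (R : realType) (x y : \bar R) :
  (forall r : R, (y < r%:E)%E -> (x <= r%:E)%E) -> (x <= y)%E.
Proof.
case: y => [v| |] H.
- apply/lee_addgt0Pr => e e0; rewrite -EFinD; apply: H.
  by rewrite lte_fin ltrDl.
- by rewrite leey.
- case: x H => [w| |] H //.
  + by move: (H (w - 1) (ltNyr _)); rewrite lee_fin => ?; exfalso; lra.
  + by have := H 0 (ltNyr _).
Qed.

Lemma nonincreasing_cvgn_lbound (R : realType) (u : (\bar R)^nat) (v : \bar R) :
  nonincreasing_seq u -> (forall k, (v <= u k)%E) ->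
  (forall r : R, (v < r%:E)%E -> \forall k \near \oo, (u k <= r%:E)%E) ->
  u @ \oo --> v.
Proof.
move=> u_noninc vu u_approx.
suff <- : ereal_inf (u @` setT) = v by exact: ereal_nonincreasing_cvgn.
apply/eqP; rewrite eq_le; apply/andP; split.
- apply: lee_fin_gt => r /u_approx [K _ HK].
  by apply: ge_ereal_inf; exists (u K); [exists K | exact: HK K (leqnn K)].
- by apply: le_ereal_inf_tmp => _ [k _ <-]; exact: vu.
Qed.

Lemma ereal_sup_lt_fin (R : realType) (X : Type) (A : set X) (f : X -> R) (r : R) :
  A !=set0 -> (ereal_sup [set (f a)%:E | a in A] < r%:E)%E ->
  exists2 c, c < r & forall a, A a -> f a < c.
Proof.
move=> [a0 Aa0] supr.
have fa0_le : ((f a0)%:E <= ereal_sup [set (f a)%:E | a in A])%E.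
  by apply: ereal_sup_ubound; exists a0.
have sup_fin : ereal_sup [set (f a)%:E | a in A] \is a fin_num.
  rewrite fin_numE -ltNye (lt_le_trans (ltNyr _) fa0_le) /=.
  by rewrite lt_eqF // (lt_trans supr (ltry r)).
pose s := fine (ereal_sup [set (f a)%:E | a in A]).
have Es : ereal_sup [set (f a)%:E | a in A] = s%:E by rewrite /s fineK.
have sr : s < r by rewrite -lte_fin -Es.
have [sc cr] := midf_lt sr.
exists ((s + r) / 2) => // a Aa; apply: le_lt_trans sc.
by rewrite -lee_fin -Es; apply: ereal_sup_ubound; exists a.
Qed.

Lemma L2_energy_continuous (R : realType) (m : nat) (t T : R)
    (alpha : R -> 'rV[R]_m) :
  t <= T -> L2 t T alpha ->
  exists2 F : R -> R, {within `[t, T], continuous F} &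
    forall th, t <= th <= T ->
      (\int[lebesgue_measure]_(s in `[t, th]) (sqn (alpha s))%:E)%E = (F th)%:E.
Proof.
move=> tT [alpha_meas alpha_L2].
pose g s := sqn (alpha s).
have g_ge0 s : 0 <= g s by apply: sumr_ge0 => i _; exact: sqr_ge0.
have g_int : lebesgue_measure.-integrable `[t, T] (EFin \o g).
  apply/integrableP; split.
    apply/measurable_realfun.measurable_EFinP; apply: measurable_sum => i.
    exact: measurable_realfun.measurable_funX.
  by under eq_integral => s _ do rewrite /comp gee0_abs ?lee_fin //.
exists (parameterized_integral lebesgue_measure t ^~ g).
  exact: parameterized_integral_continuous.
move=> th /andP[tth thT].
rewrite /parameterized_integral /Rintegral fineK //.
apply: integrable_fin_num => //; apply: integrableS g_int => //.
by apply: subset_itvl; rewrite bnd_simp.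
Qed.

Section value_function.
Variables (R : realType) (d m : nat) (T : R) (O : set 'rV[R]_d).
Variable Y : R -> 'rV[R]_d -> (R -> 'rV[R]_m) -> R -> 'rV[R]_d.
Variables (t : R) (x : 'rV[R]_d).
Hypothesis tT : t <= T.
Hypothesis Y_dom : forall alpha, L2 t T alpha ->
  forall th, t <= th <= T -> dom T O (th, Y t x alpha th).
Hypothesis Y_cont : forall alpha, L2 t T alpha ->
  {within `[t, T], continuous Y t x alpha}.

Definition cost (Phi : R * 'rV[R]_d -> R) (alpha : R -> 'rV[R]_m) : \bar R :=
  ereal_sup [set ((2^-1)%:E * \int[lebesgue_measure]_(s in `[t, theta]) (sqn (alpha s))%:E
           + (Phi (theta, Y t x alpha theta))%:E)%E | theta in `[t, T]].

Lemma V_cost Phi : V T Y Phi t x = ereal_inf [set cost Phi alpha | alpha in L2 t T].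
Proof. by []. Qed.

Lemma le_cost (Phi1 Phi2 : R * 'rV[R]_d -> R) alpha :
  L2 t T alpha -> (forall p, dom T O p -> Phi1 p <= Phi2 p) ->
  (cost Phi1 alpha <= cost Phi2 alpha)%E.
Proof.
move=> La Phi12; apply: ge_ereal_sup => _ [th Ath <-].
apply: le_ereal_sup_tmp; eexists; first by exists th.
by apply: leeD => //; rewrite lee_fin Phi12 //; apply: Y_dom => //; rewrite -in_itv.
Qed.

Lemma le_V (Phi1 Phi2 : R * 'rV[R]_d -> R) :
  (forall p, dom T O p -> Phi1 p <= Phi2 p) ->
  (V T Y Phi1 t x <= V T Y Phi2 t x)%E.
Proof.
move=> Phi12; apply: le_ereal_inf_tmp => _ [alpha La <-].
apply: ge_ereal_inf; exists (cost Phi1 alpha); first by exists alpha.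
exact: le_cost.
Qed.

Lemma cost_near_le (Phik : nat -> R * 'rV[R]_d -> R) (Phi : R * 'rV[R]_d -> R)
    alpha (r : R) :
  (forall k, {within dom T O, continuous Phik k}) ->
  (forall k p, dom T O p -> Phik k.+1 p <= Phik k p) ->
  (forall p, dom T O p -> Phik ^~ p @ \oo --> Phi p) ->
  L2 t T alpha -> (cost Phi alpha < r%:E)%E ->
  \forall k \near \oo, (cost (Phik k) alpha <= r%:E)%E.
Proof.
move=> Phik_cont Phik_noninc Phik_cvg La.
have [F F_cont FE] := L2_energy_continuous tT La.
pose Ya := Y t x alpha.
pose h (Psi : R * 'rV[R]_d -> R) th := 2^-1 * F th + Psi (th, Ya th).
have costE Psi : cost Psi alpha = ereal_sup [set (h Psi th)%:E | th in `[t, T]].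
  congr ereal_sup; apply: eq_imagel => th Ath.
  by rewrite FE -?in_itv // -EFinM -EFinD.
have path_dom th : th \in `[t, T] -> dom T O (th, Ya th).
  by move=> Ath; apply: Y_dom => //; rewrite -in_itv.
have path_cont : {within `[t, T], continuous (fun th => (th, Ya th))}.
  apply/subspace_continuousP => th Ath.
  exact: (cvg_pair (f := id) (cvg_within (F := nbhs th) _)
    ((subspace_continuousP _ _).1 (Y_cont La) th Ath)).
have h_cont k : {within `[t, T], continuous h (Phik k)}.
  apply/subspace_continuousP => th Ath; apply: cvgD.
    exact: cvgMl_tmp ((subspace_continuousP _ _).1 F_cont th Ath).
  exact: (subspace_continuousP _ _).1
    (within_continuous_comp_in path_dom path_cont (Phik_cont k)) th Ath.
rewrite costE => /ereal_sup_lt_fin[].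
  by exists t; rewrite /= in_itv /= lexx tT.
move=> c cr h_lt.
have h_noninc k th : th \in `[t, T] -> h (Phik k.+1) th <= h (Phik k) th.
  by move=> Ath; rewrite lerD2l Phik_noninc //; exact: path_dom.
have h_cvg th : th \in `[t, T] -> (fun k => h (Phik k) th) @ \oo --> h Phi th.
  by move=> Ath; apply: cvgD; [exact: cvg_cst | exact: Phik_cvg (path_dom _ _)].
apply: filterS (dini_near_lt (@segment_compact _ t T) h_cont h_noninc h_cvg h_lt).
move=> k hk_lt; rewrite costE; apply: ge_ereal_sup => _ [th Ath <-].
by rewrite lee_fin; exact/ltW/(lt_trans (hk_lt th Ath) cr).
Qed.

End value_function.

Theorem mainTheorem13 (R : realType) (d m : nat) (T : R) (O : set 'rV[R]_d)
    (n gam : 'rV[R]_d -> 'rV[R]_d) (b : R -> 'rV[R]_d -> 'rV[R]_d)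
    (sig : R -> 'rV[R]_d -> 'M[R]_(d, m))
    (Y : R -> 'rV[R]_d -> (R -> 'rV[R]_m) -> R -> 'rV[R]_d)
    (psi : R * 'rV[R]_d -> R) (psin : nat -> R * 'rV[R]_d -> R) :
  0 < T ->
  standing T O n gam b sig ->
  (forall t x alpha, 0 <= t <= T -> closure O x -> L2 t T alpha ->
     SP_sol O gam b sig T t x alpha (Y t x alpha)) ->
  (exists M : R, forall p, dom T O p -> `|psi p| <= M) ->
  Borel_on (dom T O) psi ->
  (forall k, {within dom T O, continuous (psin k)}) ->
  (forall k p, dom T O p -> psin k.+1 p <= psin k p) ->
  (forall p, dom T O p -> (fun k => psin k p) @ \oo --> usc_env (dom T O) psi p) ->
  forall t x, 0 <= t <= T -> closure O x ->
    (forall k, (V T Y (psin k.+1) t x <= V T Y (psin k) t x)%E) /\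
    (fun k => V T Y (psin k) t x) @ \oo --> V T Y (usc_env (dom T O) psi) t x.
Proof.
move=> _ _ Y_sol _ _ psin_cont psin_noninc psin_cvg t x tT0 xO.
have /andP[t_ge0 tT] := tT0.
have Y_dom alpha : L2 t T alpha ->
    forall th, t <= th <= T -> dom T O (th, Y t x alpha th).
  move=> La th /andP[tth thT]; have [_ [[_ _ Y_in _] _]] := Y_sol t x alpha tT0 xO La.
  by split; [rewrite /= (le_trans t_ge0 tth) | apply: Y_in; rewrite tth].
have Y_cont alpha : L2 t T alpha -> {within `[t, T], continuous Y t x alpha}.
  by move=> La; have [_ [[] //]] := Y_sol t x alpha tT0 xO La.
have psi_star_le k p : dom T O p -> usc_env (dom T O) psi p <= psin k p.
  move=> Dp; rewrite -(cvg_lim _ (psin_cvg p Dp)) //.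
  apply: nonincreasing_cvgn_ge; last by apply/cvg_ex; eexists; exact: psin_cvg.
  by apply/nonincreasing_seqP => j; exact: psin_noninc.
have V_noninc k : (V T Y (psin k.+1) t x <= V T Y (psin k) t x)%E.
  by apply: le_V Y_dom _ _ _; exact: psin_noninc.
split=> //; apply: nonincreasing_cvgn_lbound.
- exact/nonincreasing_seqP.
- by move=> k; apply: le_V Y_dom _ _ _; exact: psi_star_le.
- move=> r; rewrite V_cost => /ereal_inf_lt[_ [alpha La <-]].
  move/(cost_near_le tT Y_dom Y_cont psin_cont psin_noninc psin_cvg La).
  by apply: filterS => k; apply: le_trans; apply: ereal_inf_lbound; exists alpha.
Qed.
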